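(* For an arbitrary finite set $\Theta$ of pairwise commuting Pauli operators, there exist two regular sets $\Theta'$ and $\Theta''$ of Pauli operators such that $\Theta'\cup\Theta''$ generates the same group as $\Theta$, i.e. $\langle\Theta'\cup\Theta''\rangle=\langle\Theta\rangle$.
   Context: Every Pauli operator $\sigma$ (with phase) on a set of qubits can be written uniquely as $\sigma=\nu\sigma_X\sigma_Z$ with $\nu\in\{\pm1,\pm i\}$, $\sigma_X$ a tensor product of Pauli $X$ and identity factors, and $\sigma_Z$ a tensor product of Pauli $Z$ and identity factors. A set $\{\sigma_1,\dots,\sigma_q\}$ of Pauli operators is regular if $\sigma_{X,i}$ commutes with $\sigma_{Z,j}$ for all $i\neq j$. *)

From mathcomp Require Import all_boot all_algebra.
Set Implicit Arguments. Unset Strict Implicit. Unset Printing Implicit Defensive.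
Import GRing.Theory.
Local Open Scope ring_scope.

(* (a, x, z) represents  i^a * (X^{x_1} (x) ... (x) X^{x_n}) * (Z^{z_1} (x) ... (x) Z^{z_n}) *)
Definition pauli (n : nat) : finType :=
  ('Z_4 * {ffun 'I_n -> bool} * {ffun 'I_n -> bool})%type.

Definition phase n (p : pauli n) : 'Z_4 := p.1.1.
Definition xbits n (p : pauli n) : {ffun 'I_n -> bool} := p.1.2.
Definition zbits n (p : pauli n) : {ffun 'I_n -> bool} := p.2.

Definition dotb n (u v : {ffun 'I_n -> bool}) : bool :=
  odd (\sum_(i < n) (u i && v i)).

Definition xorv n (u v : {ffun 'I_n -> bool}) : {ffun 'I_n -> bool} :=
  [ffun i => u i (+) v i].

(* product:  i^a X^x Z^z * i^b X^x' Z^z' = i^(a+b+2 z.x') X^(x+x') Z^(z+z')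
   (using Z^z X^x' = (-1)^(z.x') X^x' Z^z) *)
Definition pmul n (p q : pauli n) : pauli n :=
  (phase p + phase q + (2 * dotb (zbits p) (xbits q))%:R,
   xorv (xbits p) (xbits q), xorv (zbits p) (zbits q)).

Definition pone n : pauli n := (0, [ffun => false], [ffun => false]).

(* inverse: (i^a X^x Z^z)^-1 = Z^z X^x i^-a = i^(-a + 2 x.z) X^x Z^z *)
Definition pinv n (p : pauli n) : pauli n :=
  (- phase p + (2 * dotb (xbits p) (zbits p))%:R, xbits p, zbits p).

Definition xpart n (p : pauli n) : pauli n := (0, xbits p, [ffun => false]).
Definition zpart n (p : pauli n) : pauli n := (0, [ffun => false], zbits p).

Definition pcommute n (p q : pauli n) : Prop := pmul p q = pmul q p.

Definition regular n (S : {set pauli n}) : Prop :=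
  forall p q, p \in S -> q \in S -> p != q -> pcommute (xpart p) (zpart q).

Inductive generated n (S : {set pauli n}) : pauli n -> Prop :=
| gen_one : generated S (pone n)
| gen_in p : p \in S -> generated S p
| gen_mul p q : generated S p -> generated S q -> generated S (pmul p q)
| gen_inv p : generated S p -> generated S (pinv p).

From mathcomp Require Import all_boot all_algebra ring.
Set Implicit Arguments. Unset Strict Implicit. Unset Printing Implicit Defensive.
Import GRing.Theory.
Local Open Scope ring_scope.

(* The relevant invariant of Pauli operators is the bit [xz p q] := x_p . z_q
   (mod 2), which records whether the X-part of p anticommutes with the Z-part
   of q.  It is additive in both arguments, p and q commute iff
   xz p q = xz q p, and a set is regular iff xz vanishes off its diagonal.
   On a commuting generating set one performs a symplectic Gram-Schmidt
   reduction: if some generator g has xz g g = 1, multiply every other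
   generator t by g^(xz g t); otherwise, if xz g h = 1 for some generators
   g, h, multiply t by g^(xz t h) h^(xz t g).  The new generators are then
   xz-orthogonal to the pivots, so by induction they split into two regular
   sets, to which the pivots g (resp. g and h) can be added.  When xz
   vanishes on all of Theta, Theta is itself regular. *)

Lemma double_addb (a b : bool) : ((2 * (a (+) b))%:R : 'Z_4) = (2 * a)%:R + (2 * b)%:R.
Proof. by case: a; case: b; apply/val_inj. Qed.

Lemma double_inj (a b : bool) : ((2 * a)%:R : 'Z_4) = (2 * b)%:R -> a = b.
Proof. by case: a; case: b => // /(congr1 val). Qed.

Lemma double_double (a : bool) : ((2 * a)%:R : 'Z_4) + (2 * a)%:R = 0.
Proof. by case: a; apply/val_inj. Qed.

Lemma odd_sum n (F : 'I_n -> bool) :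
  odd (\sum_(i < n) (F i : nat)) = \big[addb/false]_(i < n) F i.
Proof. by rewrite (big_morph odd oddD (erefl _)); apply: eq_bigr => i _; rewrite oddb. Qed.

Section Pauli.
Variable n : nat.
Implicit Types (u v w : {ffun 'I_n -> bool}) (p q r s t g h : pauli n)
  (S A B : {set pauli n}).

Lemma dotbC u v : dotb u v = dotb v u.
Proof. by rewrite /dotb; congr odd; apply: eq_bigr => i _; rewrite andbC. Qed.

Lemma dotb_xorl u v w : dotb (xorv u v) w = dotb u w (+) dotb v w.
Proof.
rewrite /dotb !odd_sum -big_split /=; apply: eq_bigr => i _.
by rewrite !ffunE; case: (u i); case: (v i); case: (w i).
Qed.

Lemma dotb_xorr u v w : dotb w (xorv u v) = dotb w u (+) dotb w v.
Proof. by rewrite dotbC dotb_xorl !(dotbC w). Qed.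

Lemma dotb0l v : dotb [ffun => false] v = false.
Proof. by rewrite /dotb big1 // => i _; rewrite ffunE. Qed.

Lemma dotb0r v : dotb v [ffun => false] = false.
Proof. by rewrite dotbC dotb0l. Qed.

Lemma xorv0 v : xorv v [ffun => false] = v.
Proof. by apply/ffunP => i; rewrite !ffunE addbF. Qed.

Lemma xor0v v : xorv [ffun => false] v = v.
Proof. by apply/ffunP => i; rewrite !ffunE. Qed.

Lemma xorvv v : xorv v v = [ffun => false].
Proof. by apply/ffunP => i; rewrite !ffunE addbb. Qed.

Lemma xorvA u v w : xorv u (xorv v w) = xorv (xorv u v) w.
Proof. by apply/ffunP => i; rewrite !ffunE addbA. Qed.

Lemma pmulA p q r : pmul p (pmul q r) = pmul (pmul p q) r.
Proof.
case: p => [[a x] z]; case: q => [[b x'] z']; case: r => [[c x''] z''].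
rewrite /pmul /phase /xbits /zbits /= !xorvA dotb_xorl dotb_xorr !double_addb.
by congr (_, _, _); ring.
Qed.

Lemma pmul1 p : pmul p (pone n) = p.
Proof.
case: p => [[a x] z].
by rewrite /pmul /pone /phase /xbits /zbits /= dotb0r !xorv0 !addr0.
Qed.

Lemma pmulV p : pmul p (pinv p) = pone n.
Proof.
case: p => [[a x] z]; rewrite /pmul /pinv /pone /phase /xbits /zbits /= !xorvv.
by rewrite addrA subrr add0r dotbC double_double.
Qed.

Lemma pmulK p q : pmul (pmul p q) (pinv q) = p.
Proof. by rewrite -pmulA pmulV pmul1. Qed.

Definition xz p q : bool := dotb (zbits q) (xbits p).

Lemma xz_mulr p q r : xz p (pmul q r) = xz p q (+) xz p r.
Proof. exact: dotb_xorl. Qed.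

Lemma xz_mull p q r : xz (pmul q r) p = xz q p (+) xz r p.
Proof. exact: dotb_xorr. Qed.

Lemma xz1r p : xz p (pone n) = false.
Proof. exact: dotb0l. Qed.

Lemma xz1l p : xz (pone n) p = false.
Proof. exact: dotb0r. Qed.

Lemma pcommute_parts p q : xz p q = false -> pcommute (xpart p) (zpart q).
Proof.
rewrite /xz /pcommute /pmul /xpart /zpart /phase /xbits /zbits /= => xz0.
by rewrite xz0 dotb0l xorv0 xor0v xorv0 xor0v.
Qed.

Lemma pcommute_xz p q : pcommute p q -> xz p q = xz q p.
Proof.
rewrite /pcommute /pmul => /(congr1 (fun t => t.1.1)) /=.
by rewrite /phase (addrC q.1.1) => /addrI /double_inj; rewrite /xz => ->.
Qed.

Lemma regular_setU1 S g : regular S ->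
  (forall t, t \in S -> ~~ xz g t && ~~ xz t g) -> regular (g |: S).
Proof.
move=> regS orth p q /setU1P[->|Sp] /setU1P[->|Sq] p_neq_q.
- by rewrite eqxx in p_neq_q.
- by apply: pcommute_parts; case/andP: (orth q Sq) => /negbTE.
- by apply: pcommute_parts; case/andP: (orth p Sp) => _ /negbTE.
- exact: regS.
Qed.

Lemma regular_xz0 S : {in S &, forall p q, xz p q = false} -> regular S.
Proof. by move=> xz0 p q Sp Sq _; apply/pcommute_parts/xz0. Qed.

Lemma sub_generated A B p :
  (forall s, s \in A -> generated B s) -> generated A p -> generated B p.
Proof. by move=> AB; elim=> *; [apply: gen_one | apply: AB | apply: gen_mul | apply: gen_inv]. Qed.

Lemma generated_eq A B :
  (forall s, s \in A -> generated B s) -> (forall s, s \in B -> generated A s) ->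
  forall p, generated A p <-> generated B p.
Proof. by move=> AB BA p; split; apply: sub_generated. Qed.

Lemma generated_setUr A B C :
  (forall p, generated A p <-> generated B p) ->
  forall p, generated (C :|: A) p <-> generated (C :|: B) p.
Proof.
move=> eqAB; apply: generated_eq => s /setUP[Cs | Ds].
- by apply: gen_in; rewrite inE Cs.
- by apply: sub_generated ((eqAB s).1 (gen_in Ds)) => r Br; apply: gen_in; rewrite inE Br orbT.
- by apply: gen_in; rewrite inE Cs.
- by apply: sub_generated ((eqAB s).2 (gen_in Ds)) => r Ar; apply: gen_in; rewrite inE Ar orbT.
Qed.

Lemma generated_if A g (b : bool) : g \in A -> generated A (if b then g else pone n).
Proof. by case: b => Ag; [apply: gen_in | apply: gen_one]. Qed.

Lemma generated_xz_orth S g :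
  (forall s, s \in S -> ~~ xz g s && ~~ xz s g) ->
  forall t, generated S t -> ~~ xz g t && ~~ xz t g.
Proof.
move=> orth t; elim=> [|s /orth //| a b _ + _ | //].
  by rewrite xz1r xz1l.
by rewrite xz_mulr xz_mull => /andP[/negbTE-> /negbTE->] /andP[/negbTE-> /negbTE->].
Qed.

Lemma generated_xz_sym S : {in S &, forall p q, xz p q = xz q p} ->
  forall p q, generated S p -> generated S q -> xz p q = xz q p.
Proof.
move=> symS.
have symSG p q : p \in S -> generated S q -> xz p q = xz q p.
  move=> Sp; elim=> [| s Ss | a b _ IHa _ IHb | //]; first by rewrite xz1r xz1l.
    exact: symS.
  by rewrite xz_mulr xz_mull IHa IHb.
move=> p q; elim=> [| s Ss | a b _ IHa _ IHb | //]; first by rewrite xz1r xz1l.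
  by move=> Sq; apply: symSG.
by move=> Sq; rewrite xz_mulr xz_mull IHa ?IHb.
Qed.

Definition sweep S g h (c : pauli n -> pauli n) : {set pauli n} :=
  [set pmul t (c t) | t in S :\: [set g; h]].

Definition decomposition S T1 T2 := regular T1 /\ regular T2 /\
  forall p, generated (T1 :|: T2) p <-> generated S p.

Section Sweep.
Variables (S : {set pauli n}) (g h : pauli n) (c : pauli n -> pauli n).
Hypotheses (Sg : g \in S) (Sh : h \in S) (gen_c : forall t, generated [set g; h] (c t)).

Lemma card_sweep : (#|sweep S g h c| < #|S|)%N.
Proof.
apply: leq_ltn_trans (leq_imset_card _ _) _.
rewrite (cardsD1 g S) Sg add1n ltnS subset_leq_card //.
by apply: setDS; rewrite sub1set !inE eqxx.
Qed.

Lemma sweep_generated t : t \in sweep S g h c -> generated S t.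
Proof.
case/imsetP=> s /setDP[Ss _] ->; apply: gen_mul; first exact: gen_in.
by apply: sub_generated (gen_c s) => r /set2P[]->; apply: gen_in.
Qed.

Lemma generated_sweep p :
  generated ([set g; h] :|: sweep S g h c) p <-> generated S p.
Proof.
apply: generated_eq => s.
  by case/setUP=> [/set2P[]-> | /sweep_generated //]; apply: gen_in.
move=> Ss; case: (boolP (s \in [set g; h])) => [gh_s | gh'_s].
  by apply: gen_in; rewrite inE gh_s.
rewrite -(pmulK s (c s)); apply: gen_mul.
  by apply: gen_in; rewrite inE; apply/orP; right; apply: imset_f; rewrite inE gh'_s.
by apply: gen_inv; apply: sub_generated (gen_c s) => r gh_r; apply: gen_in; rewrite inE gh_r.
Qed.

Lemma decomposition_sweep T1 T2 :
  {in S &, forall p q, xz p q = xz q p} ->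
  (forall t, t \in S -> ~~ xz g (pmul t (c t)) && ~~ xz h (pmul t (c t))) ->
  decomposition (sweep S g h c) T1 T2 -> decomposition S (g |: T1) (h |: T2).
Proof.
move=> symS orth [regT1 [regT2 genT]].
have symSG := generated_xz_sym symS.
have orth_sweep k : k \in [set g; h] ->
    forall t, t \in sweep S g h c -> ~~ xz k t && ~~ xz t k.
  move=> gh_k t sw_t; rewrite (symSG t k (sweep_generated sw_t)).
    by case/imsetP: sw_t => s /setDP[Ss _] ->; case/set2P: gh_k => ->;
      rewrite andbb; case/andP: (orth s Ss).
  by apply: gen_in; case/set2P: gh_k => ->.
have orth_T k : k \in [set g; h] -> forall t, t \in T1 :|: T2 -> ~~ xz k t && ~~ xz t k.
  move=> gh_k t T_t; apply: generated_xz_orth (orth_sweep k gh_k) _ _.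
  by apply/genT/gen_in.
split; [|split].
- by apply: regular_setU1 => // t T1t; apply: orth_T; rewrite !inE ?eqxx ?T1t.
- by apply: regular_setU1 => // t T2t; apply: orth_T; rewrite !inE ?eqxx ?T2t ?orbT.
- have -> : (g |: T1) :|: (h |: T2) = [set g; h] :|: (T1 :|: T2).
    by apply/setP => t; rewrite !inE; do !case: (_ == _); case: (t \in T1).
  by move=> p; rewrite (generated_setUr _ genT) generated_sweep.
Qed.

End Sweep.

Lemma decomposition_exists S : {in S &, forall p q, xz p q = xz q p} ->
  exists T1 T2, decomposition S T1 T2.
Proof.
elim: {S}_.+1 {-2}S (ltnSn #|S|) => // k IH S; rewrite ltnS => leSk symS.
have symSG := generated_xz_sym symS.
have IHsweep g h c : g \in S -> h \in S -> (forall t, generated [set g; h] (c t)) ->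
    (forall t, t \in S -> ~~ xz g (pmul t (c t)) && ~~ xz h (pmul t (c t))) ->
    exists T1 T2, decomposition S T1 T2.
  move=> Sg Sh gen_c orth; have sweepS := sweep_generated Sg Sh gen_c.
  have [||T1 [T2 dec]] := IH (sweep S g h c).
  - exact: leq_trans (card_sweep _ _ Sg) leSk.
  - by move=> p q /sweepS Gp /sweepS /(symSG _ _ Gp).
  by exists (g |: T1), (h |: T2); apply: decomposition_sweep.
case: (boolP [exists g in S, xz g g]) => [/exists_inP[g Sg xzgg] | no_diag].
  apply: (IHsweep g g (fun t => if xz g t then g else pone n)) => // [t | t _].
    by apply: generated_if; rewrite !inE eqxx.
  by rewrite andbb xz_mulr; case: (xz g t); rewrite /= ?xzgg ?xz1r.
have diag0 r : r \in S -> xz r r = false.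
  by move=> Sr; apply: contraNF no_diag => xzrr; apply/exists_inP; exists r.
case: (boolP [exists g in S, exists h in S, xz g h]) =>
    [/exists_inP[g Sg /exists_inP[h Sh xzgh]] | no_pair].
  have xzhg : xz h g by rewrite symS.
  pose c t := pmul (if xz t h then g else pone n) (if xz t g then h else pone n).
  apply: (IHsweep g h c) => // t.
    by apply: gen_mul; apply: generated_if; rewrite !inE eqxx ?orbT.
  move=> St; rewrite !xz_mulr (symS g t) // (symS h t) //.
  by case: (xz t h); case: (xz t g); rewrite /= ?xz1r ?diag0 ?xzgh ?xzhg.
exists S, set0; split; [|split].
- apply: regular_xz0 => p q Sp Sq; apply: contraNF no_pair => xzpq.
  by apply/exists_inP; exists p => //; apply/exists_inP; exists q.
- by move=> p q; rewrite inE.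
- by move=> p; rewrite setU0.
Qed.

End Pauli.

Theorem lemma9 (n : nat) (Theta : {set pauli n}) :
  (forall p q, p \in Theta -> q \in Theta -> pcommute p q) ->
  exists Theta1 Theta2 : {set pauli n},
    regular Theta1 /\ regular Theta2 /\
    (forall p, generated (Theta1 :|: Theta2) p <-> generated Theta p).
Proof.
move=> comm; apply: decomposition_exists => p q Tp Tq.
exact/pcommute_xz/comm.
Qed.
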